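(* Let $H$ be a Kekul\'ean hexagonal system. There is a one-to-one correspondence between the maximal hypercubes of $R(H)$ (induced subgraphs isomorphic to some $Q_n$ that are not properly contained in another such induced subgraph) and the Clar covers of $H$ without alternating hexagons.
   Context: A hexagonal system is a 2-connected finite plane graph in which every interior face is a regular hexagon of side length one; its hexagons are the boundaries of its interior faces; it is Kekul\'ean if it has a perfect matching. A Clar cover of $H$ is a spanning subgraph each of whose components is a hexagon of $H$ or a single edge. A Clar cover $C$ has an alternating hexagon if some hexagon of $H$ that is not a component of $C$ has three pairwise disjoint edges that are single-edge components of $C$ (so its edges alternate between single-edge components of $C$ and edges not in $C$). The resonance graph $R(H)$ has the perfect matchings of $H$ as vertices, two adjacent iff their symmetric difference is the edge set of a hexagon of $H$. *)

From HB Require Import structures.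
From mathcomp Require Import all_boot all_algebra.
From mathcomp Require Import finmap.
Set Implicit Arguments. Unset Strict Implicit. Unset Printing Implicit Defensive.
Import GRing.Theory Num.Theory.
Local Open Scope fset_scope.
Local Open Scope ring_scope.

(* The hexagonal (honeycomb) lattice in its "brick wall" model:
   vertices are Z^2; horizontal edges (x,y)-(x+1,y) always exist,
   vertical edges (x,y)-(x,y+1) exist iff x+y is even.
   Faces (hexagons) are the 2x1 bricks with lower-left corner (x,y), x+y even. *)
Definition vtx := (int * int)%type.
(* (x, y, true) = horizontal edge (x,y)-(x+1,y);
   (x, y, false) = vertical edge (x,y)-(x,y+1). *)
Definition edge := (int * int * bool)%type.
(* a hexagon (lattice cell) is named by its lower-left corner *)
Definition cell := (int * int)%type.

Definition ends (e : edge) : vtx * vtx :=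
  let: (x, y, h) := e in
  if h then ((x, y), (x + 1, y)) else ((x, y), (x, y + 1)).
Definition incident (v : vtx) (e : edge) : bool :=
  (v == (ends e).1) || (v == (ends e).2).
Definition touch (e f : edge) : bool :=
  incident (ends e).1 f || incident (ends e).2 f.

Definition valid_cell (c : cell) : bool := (2 %| c.1 + c.2)%Z.

Definition hex_edges (c : cell) : {fset edge} :=
  let: (x, y) := c in
  [fset (x, y, true); (x + 1, y, true); (x, y + 1, true); (x + 1, y + 1, true);
        (x, y, false); (x + 2, y, false)].
Definition hex_vertices (c : cell) : {fset vtx} :=
  let: (x, y) := c in
  [fset (x, y); (x + 1, y); (x + 2, y); (x, y + 1); (x + 1, y + 1); (x + 2, y + 1)].

Definition cell_adj (c d : cell) : bool := (hex_edges c `&` hex_edges d) != fset0.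

Definition cell_connected_in (P : pred cell) (c d : cell) : Prop :=
  exists p : seq cell, [/\ path cell_adj c p, last c p = d & all P (c :: p)].

(* A hexagonal system, given by its set S of hexagons: a finite nonempty set of
   lattice hexagons, connected (through shared edges), without holes (every
   hexagon not in S is connected outside S to the unbounded region, namely to a
   hexagon lying to the right of all hexagons of S). *)
Definition hexagonal_system (S : {fset cell}) : Prop :=
  [/\ S != fset0,
      {in S, forall c, valid_cell c},
      {in S &, forall c d, cell_connected_in (fun z => z \in S) c d}
    & forall c, valid_cell c -> c \notin S ->
        exists2 d, (forall c', c' \in S -> c'.1 < d.1)
                 & cell_connected_in (fun z => valid_cell z && (z \notin S)) c d].

Definition Hedge (S : {fset cell}) (e : edge) : Prop :=
  exists2 c, c \in S & e \in hex_edges c.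
Definition Hvtx (S : {fset cell}) (v : vtx) : Prop :=
  exists2 c, c \in S & v \in hex_vertices c.

Definition perfect_matching (S : {fset cell}) (M : {fset edge}) : Prop :=
  (forall e, e \in M -> Hedge S e) /\
  (forall v, Hvtx S v -> #|` [fset e in M | incident v e]| = 1%N).

Definition kekulean (S : {fset cell}) : Prop := exists M, perfect_matching S M.

Definition symdiff (A B : {fset edge}) : {fset edge} := (A `\` B) `|` (B `\` A).
Definition res_adj (S : {fset cell}) (M M' : {fset edge}) : Prop :=
  exists2 c, c \in S & symdiff M M' = hex_edges c.

Definition cube_adj n (A B : {set 'I_n}) : bool :=
  #|((A :\: B) :|: (B :\: A))%SET| == 1%N.

Definition hypercube_in (S : {fset cell}) (U : {fset {fset edge}}) : Prop :=
  (forall M, M \in U -> perfect_matching S M) /\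
  exists n (phi : {set 'I_n} -> {fset edge}),
    [/\ injective phi,
        (forall M, M \in U <-> exists A, phi A = M)
      & forall A B, res_adj S (phi A) (phi B) <-> cube_adj A B].

Definition maximal_hypercube (S : {fset cell}) (U : {fset {fset edge}}) : Prop :=
  hypercube_in S U /\ ~ (exists U', hypercube_in S U' /\ U `<` U').

(* Clar covers, represented by their edge sets (spanning subgraphs) *)
Definition single_comp (F : {fset edge}) (e : edge) : Prop :=
  e \in F /\ (forall f, f \in F -> touch e f -> f = e).

Definition hex_comp (S : {fset cell}) (F : {fset edge}) (c : cell) : Prop :=
  [/\ c \in S, hex_edges c `<=` F &
      forall f, f \in F -> (exists2 v, v \in hex_vertices c & incident v f) ->
        f \in hex_edges c].

Definition clar_cover (S : {fset cell}) (F : {fset edge}) : Prop :=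
  [/\ forall e, e \in F -> Hedge S e,
      forall v, Hvtx S v -> exists2 e, e \in F & incident v e
    & forall e, e \in F -> single_comp F e \/ exists2 c, hex_comp S F c & e \in hex_edges c].

Definition alternating_hex (S : {fset cell}) (F : {fset edge}) : Prop :=
  exists c, [/\ c \in S, ~ hex_comp S F c &
    exists e1 e2 e3,
      [/\ e1 \in hex_edges c, e2 \in hex_edges c, e3 \in hex_edges c,
          ~~ touch e1 e2 /\ ~~ touch e1 e3 /\ ~~ touch e2 e3
        & single_comp F e1 /\ single_comp F e2 /\ single_comp F e3]].

From mathcomp Require Import all_boot all_algebra finmap.
From mathcomp Require Import zify.
From Stdlib Require Import ClassicalEpsilon ProofIrrelevance.
Set Implicit Arguments. Unset Strict Implicit. Unset Printing Implicit Defensive.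
Local Open Scope fset_scope.

(* Two distinct lattice hexagons share at most one edge.  Hence in every
   4-cycle M1 M2 M3 M4 of R(H) the hexagons labelling opposite edges coincide
   and the two hexagons are vertex-disjoint (otherwise they would share two
   edges).  Propagating this through a hypercube shows that every induced
   hypercube of R(H) is {M0 (+) union of hexagons in A | A}, for a perfect
   matching M0 and pairwise vertex-disjoint M0-alternating hexagons c_1..c_n;
   the union of M0 and the c_i is then a Clar cover whose perfect matchings
   are exactly that hypercube.  Conversely the perfect matchings inside a
   Clar cover F form such a hypercube.  It extends to a larger hypercube
   exactly when a hexagon outside the c_i has every other edge a single edge
   of F, i.e. when F has an alternating hexagon.  Finally F is the union of
   its perfect matchings, so F |-> {perfect matchings of F} is injective. *)

(** * Coordinates on a hexagon *)

(* Edge [k] of hexagon [c] joins vertices [k] and [k + 1]; both are numbered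
   counterclockwise modulo 6 from the lower-left corner. *)
Definition hex_edge (c : cell) (k : nat) : edge :=
  let x := c.1 in let y := c.2 in
  match (k %% 6)%N with
  | 0 => (x, y, true) | 1 => ((x + 1)%R, y, true) | 2 => ((x + 2)%R, y, false)
  | 3 => ((x + 1)%R, (y + 1)%R, true) | 4 => (x, (y + 1)%R, true) | _ => (x, y, false) end.
Definition hex_vertex (c : cell) (k : nat) : vtx :=
  let x := c.1 in let y := c.2 in
  match (k %% 6)%N with
  | 0 => (x, y) | 1 => ((x + 1)%R, y) | 2 => ((x + 2)%R, y)
  | 3 => ((x + 2)%R, (y + 1)%R) | 4 => ((x + 1)%R, (y + 1)%R) | _ => (x, (y + 1)%R) end.

Lemma hex_edge_mod c k : hex_edge c (k %% 6) = hex_edge c k.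
Proof. by rewrite /hex_edge modn_mod. Qed.
Lemma hex_vertex_mod c k : hex_vertex c (k %% 6) = hex_vertex c k.
Proof. by rewrite /hex_vertex modn_mod. Qed.

Lemma hex_edgesP c e : reflect (exists2 k, k < 6 & e = hex_edge c k) (e \in hex_edges c).
Proof.
case: c => x y; rewrite /hex_edges !inE.
apply: (iffP idP).
  move=> /orP[/orP[/orP[/orP[/orP[/eqP->|/eqP->]|/eqP->]|/eqP->]|/eqP->]|/eqP->];
  [by exists 0|by exists 1|by exists 4|by exists 3|by exists 5|by exists 2].
case=> k; case: k => [|[|[|[|[|[|k]]]]]] // _ ->; rewrite /hex_edge /= ?eqxx ?orbT //.
Qed.

Lemma mem_hex_edge c k : hex_edge c k \in hex_edges c.
Proof. apply/hex_edgesP; exists (k %% 6); [by rewrite ltn_mod|by rewrite hex_edge_mod]. Qed.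

Lemma hex_verticesP c v : reflect (exists2 k, k < 6 & v = hex_vertex c k) (v \in hex_vertices c).
Proof.
case: c => x y; rewrite /hex_vertices !inE.
apply: (iffP idP).
  move=> /orP[/orP[/orP[/orP[/orP[/eqP->|/eqP->]|/eqP->]|/eqP->]|/eqP->]|/eqP->];
  [by exists 0|by exists 1|by exists 2|by exists 5|by exists 4|by exists 3].
case=> k; case: k => [|[|[|[|[|[|k]]]]]] // _ ->; rewrite /hex_vertex /= ?eqxx ?orbT //.
Qed.

Lemma mem_hex_vertex c k : hex_vertex c k \in hex_vertices c.
Proof. apply/hex_verticesP; exists (k %% 6); [by rewrite ltn_mod|by rewrite hex_vertex_mod]. Qed.

Lemma addr11 (x : int) : (x + 1 + 1 = x + 2)%R.
Proof. lia. Qed.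

Lemma incident_hex_edge c k v :
  incident v (hex_edge c k) = (v == hex_vertex c k) || (v == hex_vertex c k.+1).
Proof.
rewrite -hex_edge_mod -(hex_vertex_mod c k) -(hex_vertex_mod c k.+1).
have : k %% 6 < 6 by rewrite ltn_mod.
have -> : (k.+1 %% 6 = (k %% 6).+1 %% 6)%N by rewrite -addn1 -[in RHS]addn1 modnDml.
case: (k %% 6)%N => [|[|[|[|[|[|k']]]]]] // _; rewrite /incident /hex_edge /hex_vertex /=;
  rewrite ?addr11 //; by rewrite orbC.
Qed.

Lemma hex_vertex_inj c i j : i < 6 -> j < 6 -> hex_vertex c i = hex_vertex c j -> i = j.
Proof.
case: c => x y.
case: i => [|[|[|[|[|[|i]]]]]] //; case: j => [|[|[|[|[|[|j]]]]]] // _ _;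
 rewrite /hex_vertex /= => /eqP; rewrite xpair_eqE => H; lia.
Qed.

Lemma hex_edge_inj c i j : i < 6 -> j < 6 -> hex_edge c i = hex_edge c j -> i = j.
Proof.
case: c => x y.
case: i => [|[|[|[|[|[|i]]]]]] //; case: j => [|[|[|[|[|[|j]]]]]] // _ _;
 rewrite /hex_edge /= => /eqP; rewrite !xpair_eqE => H; lia.
Qed.

Lemma eq_hex_vertex c i j : (hex_vertex c i == hex_vertex c j) = (i %% 6 == j %% 6)%N.
Proof.
apply/eqP/eqP; last by move=> H; rewrite -hex_vertex_mod H hex_vertex_mod.
rewrite -(hex_vertex_mod c i) -(hex_vertex_mod c j) => /hex_vertex_inj; apply; by rewrite ltn_mod.
Qed.
Lemma eq_hex_edge c i j : (hex_edge c i == hex_edge c j) = (i %% 6 == j %% 6)%N.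
Proof.
apply/eqP/eqP; last by move=> H; rewrite -hex_edge_mod H hex_edge_mod.
rewrite -(hex_edge_mod c i) -(hex_edge_mod c j) => /hex_edge_inj; apply; by rewrite ltn_mod.
Qed.

Lemma hex_edge_neq_succ c k : hex_edge c k != hex_edge c k.+1.
Proof. by rewrite eq_hex_edge; lia. Qed.

Definition hex_across (c : cell) (k : nat) : cell :=
  let x := c.1 in let y := c.2 in
  match (k %% 6)%N with
  | 0 => ((x - 1)%R, (y - 1)%R) | 1 => ((x + 1)%R, (y - 1)%R) | 2 => ((x + 2)%R, y)
  | 3 => ((x + 1)%R, (y + 1)%R) | 4 => ((x - 1)%R, (y + 1)%R) | _ => ((x - 2)%R, y) end.

Lemma hex_across_edge c d k : valid_cell c -> valid_cell d -> k < 6 ->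
  hex_edge c k \in hex_edges d -> d = c \/ d = hex_across c k.
Proof.
move=> Vc Vd Hk /hex_edgesP [l Hl H]; move: Vc Vd Hk Hl H.
case: c => x y; case: d => u v; rewrite /valid_cell /=.
case: k => [|[|[|[|[|[|k]]]]]] //; case: l => [|[|[|[|[|[|l]]]]]] // Vc Vd _ _;
 rewrite /hex_edge /hex_across /= => /eqP; rewrite !xpair_eqE => H;
 first [ left; apply/eqP; rewrite xpair_eqE; lia
       | right; apply/eqP; rewrite xpair_eqE; lia | exfalso; lia ].
Qed.

Lemma incident_hex_vertex_edge c m k : incident (hex_vertex c m) (hex_edge c k) =
  (m %% 6 == k %% 6)%N || (m %% 6 == k.+1 %% 6)%N.
Proof. by rewrite incident_hex_edge !eq_hex_vertex. Qed.

Lemma hex_across_inj c i j : i < 6 -> j < 6 -> hex_across c i = hex_across c j -> i = j.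
Proof.
case: c => x y.
case: i => [|[|[|[|[|[|i]]]]]] //; case: j => [|[|[|[|[|[|j]]]]]] // _ _;
 rewrite /hex_across /= => /eqP; rewrite !xpair_eqE => H; lia.
Qed.

Lemma hex_eq_of_two_edges c d e f : valid_cell c -> valid_cell d -> e != f ->
  e \in hex_edges c -> f \in hex_edges c -> e \in hex_edges d -> f \in hex_edges d -> d = c.
Proof.
move=> Vc Vd nef /hex_edgesP[i Hi Ei] /hex_edgesP[j Hj Ej]; rewrite Ei Ej => Hd1 Hd2.
have [//|E1] := hex_across_edge Vc Vd Hi Hd1.
have [//|E2] := hex_across_edge Vc Vd Hj Hd2.
have eij := hex_across_inj Hi Hj (etrans (esym E1) E2).
by move: nef; rewrite Ei Ej eij eqxx.
Qed.

Lemma touch_hex_edge c k f :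
  touch (hex_edge c k) f = incident (hex_vertex c k) f || incident (hex_vertex c k.+1) f.
Proof.
rewrite -(hex_edge_mod c k) -(hex_vertex_mod c k) -(hex_vertex_mod c k.+1).
have : k %% 6 < 6 by rewrite ltn_mod.
have -> : (k.+1 %% 6 = (k %% 6).+1 %% 6)%N by rewrite -addn1 -[in RHS]addn1 modnDml.
case: (k %% 6)%N => [|[|[|[|[|[|k']]]]]] // _;
  by rewrite /touch /hex_edge /hex_vertex /= ?addr11 // orbC.
Qed.

Lemma touch_hex_edges c i j : touch (hex_edge c i) (hex_edge c j) =
  [|| (i %% 6 == j %% 6)%N, (i %% 6 == j.+1 %% 6)%N,
      (i.+1 %% 6 == j %% 6)%N | (i.+1 %% 6 == j.+1 %% 6)%N].
Proof. by rewrite touch_hex_edge !incident_hex_vertex_edge !orbA. Qed.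

Lemma non_touching_parity c i j l : i < 6 -> j < 6 -> l < 6 ->
  ~~ touch (hex_edge c i) (hex_edge c j) -> ~~ touch (hex_edge c i) (hex_edge c l) ->
  ~~ touch (hex_edge c j) (hex_edge c l) ->
  forall k, k < 6 -> odd k = odd i -> [\/ k = i, k = j | k = l].
Proof.
rewrite !touch_hex_edges.
case: i => [|[|[|[|[|[|i]]]]]] //; case: j => [|[|[|[|[|[|j]]]]]] //;
case: l => [|[|[|[|[|[|l]]]]]] // _ _ _ /= H1 H2 H3 k;
case: k => [|[|[|[|[|[|k]]]]]] //= _ _; by [constructor 1|constructor 2|constructor 3].
Qed.

Lemma touch_incident v e f : incident v e -> incident v f -> touch e f.
Proof. by rewrite /touch /incident => /orP[]/eqP <- ->; rewrite ?orbT. Qed.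

Lemma single_comp_uniq F e f v : single_comp F e -> f \in F ->
  incident v e -> incident v f -> f = e.
Proof. by case=> _ single fF ve vf; apply: single fF (touch_incident ve vf). Qed.

(** * Perfect matchings and alternating hexagons *)

Lemma Hvtx_incident S e v : Hedge S e -> incident v e -> Hvtx S v.
Proof.
case=> c Sc /hex_edgesP[k _ ->]; rewrite incident_hex_edge => /orP[]/eqP->;
  by exists c => //; exact: mem_hex_vertex.
Qed.

Lemma pm_incident_uniq S M v e f : perfect_matching S M -> e \in M -> f \in M ->
  incident v e -> incident v f -> e = f.
Proof.
case=> HE HV eM fM ve vf.
have := HV v (Hvtx_incident (HE e eM) ve).
move/eqP/cardfs1P=> [x Hx].
have : e \in [fset e in M | incident v e] by rewrite !inE eM ve.
have : f \in [fset e in M | incident v e] by rewrite !inE fM vf.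
by rewrite Hx !inE => /eqP -> /eqP ->.
Qed.

Lemma pm_cover S M v : perfect_matching S M -> Hvtx S v -> exists2 e, e \in M & incident v e.
Proof.
case=> HE HV /HV /eqP/cardfs1P[x Hx].
have : x \in [fset e in M | incident v e] by rewrite Hx inE.
by rewrite !inE => /andP[]; exists x.
Qed.

Lemma pm_Hedge S M e : perfect_matching S M -> e \in M -> Hedge S e.
Proof. by case=> HE _; apply: HE. Qed.

Lemma perfect_matchingI S M : (forall e, e \in M -> Hedge S e) ->
  (forall v, Hvtx S v -> exists2 e, e \in M & incident v e) ->
  (forall v e f, e \in M -> f \in M -> incident v e -> incident v f -> e = f) ->
  perfect_matching S M.
Proof.
move=> HE HV HU; split => // v /HV [e eM ve].
apply/eqP/cardfs1P; exists e; apply/fsetP=> f; rewrite !inE.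
apply/andP/eqP; first by case=> fM vf; apply: HU fM eM vf ve.
by move=> ->.
Qed.

Lemma symdiffE A B e : (e \in symdiff A B) = ((e \in A) != (e \in B)).
Proof. rewrite /symdiff !inE; by case: (e \in A); case: (e \in B). Qed.

Lemma symdiffK A B : symdiff A (symdiff A B) = B.
Proof.
by apply/fsetP=> e; rewrite !symdiffE; case: (e \in A); case: (e \in B).
Qed.

Lemma symdiffC A B : symdiff A B = symdiff B A.
Proof. by apply/fsetP=> e; rewrite !symdiffE eq_sym. Qed.

Lemma mem_hex_symdiff M M' c (E : symdiff M M' = hex_edges c) e :
  (e \in hex_edges c) = ((e \in M) != (e \in M')).
Proof. by rewrite -E symdiffE. Qed.

Definition resonant (S : {fset cell}) (M : {fset edge}) (c : cell) : Prop :=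
  c \in S /\ exists b, forall k, (hex_edge c k \in M) = (odd k == b).

Lemma odd_mod6 k : odd (k %% 6) = odd k.
Proof. by rewrite odd_mod. Qed.

Lemma mod6_ind (P : nat -> Prop) :
  (forall k, P (k %% 6)%N -> P k) -> (forall k, k < 6 -> P k) -> forall k, P k.
Proof. move=> H1 H2 k; apply: H1; apply: H2; by rewrite ltn_mod. Qed.

Lemma hex_vertex_pred c k : hex_vertex c (k + 5).+1 = hex_vertex c k.
Proof.
rewrite -hex_vertex_mod; have ->: ((k + 5).+1 = k + 6)%N by lia.
by rewrite modnDr hex_vertex_mod.
Qed.

Lemma incident_hex_vertex_pred c k : incident (hex_vertex c k) (hex_edge c (k + 5)).
Proof. by rewrite incident_hex_edge hex_vertex_pred eqxx orbT. Qed.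
Lemma incident_hex_vertex c k : incident (hex_vertex c k) (hex_edge c k).
Proof. by rewrite incident_hex_edge eqxx. Qed.
Lemma incident_hex_vertex_succ c k : incident (hex_vertex c k.+1) (hex_edge c k).
Proof. by rewrite incident_hex_edge eqxx orbT. Qed.

Lemma pm_hex_edge_succF S M c k : perfect_matching S M ->
  hex_edge c k \in M -> hex_edge c k.+1 \in M -> False.
Proof.
move=> pM kM kSM; move: (hex_edge_neq_succ c k).
by rewrite (pm_incident_uniq pM kM kSM (incident_hex_vertex_succ c k) (incident_hex_vertex _ _))
  eqxx.
Qed.

Lemma odd_add5 k : odd (k + 5) = ~~ odd k.
Proof. by rewrite oddD /= addbT. Qed.

Lemma resonant_cover S M c v : resonant S M c -> v \in hex_vertices c ->
  exists2 f, f \in M & (f \in hex_edges c) && incident v f.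
Proof.
case=> _ [b Hb] /hex_verticesP[k _ ->].
case E: (odd k == b).
  by exists (hex_edge c k); rewrite ?Hb ?E // mem_hex_edge incident_hex_vertex.
exists (hex_edge c (k + 5)); last by rewrite mem_hex_edge incident_hex_vertex_pred.
by rewrite Hb odd_add5; move: E; clear; case: (odd k); case: b.
Qed.

Lemma resonant_pm_edge S M c v f : perfect_matching S M -> resonant S M c -> v \in hex_vertices c ->
  f \in M -> incident v f -> f \in hex_edges c.
Proof.
move=> pmM rM vc fM vf; have [g gM /andP[gc vg]] := resonant_cover rM vc.
by rewrite (pm_incident_uniq pmM fM gM vf vg).
Qed.

Lemma Hedge_hex S c e : c \in S -> e \in hex_edges c -> Hedge S e.
Proof. by move=> Sc ec; exists c. Qed.

Lemma incident_hex_vertices c e v : e \in hex_edges c -> incident v e -> v \in hex_vertices c.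
Proof.
by case/hex_edgesP=> k _ ->; rewrite incident_hex_edge => /orP[]/eqP->; apply: mem_hex_vertex.
Qed.

Lemma hex_edges_at_vertex c k e : e \in hex_edges c -> incident (hex_vertex c k) e ->
  e = hex_edge c k \/ e = hex_edge c (k + 5).
Proof.
move=> He Hi; have E5 : hex_edge c (k + 5) = hex_edge c (k %% 6 + 5).
  by rewrite -hex_edge_mod -[RHS]hex_edge_mod modnDml.
rewrite E5 -(hex_edge_mod c k); move: Hi; rewrite -(hex_vertex_mod c k).
have : k %% 6 < 6 by rewrite ltn_mod.
move: (k %% 6)%N => k' Hk'.
case/hex_edgesP: He => l Hl ->; rewrite incident_hex_vertex_edge.
case: l Hl => [|[|[|[|[|[|l]]]]]] // _; case: k' Hk' => [|[|[|[|[|[|k']]]]]] // _ /=; auto.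
Qed.

Lemma alternating6 (P : nat -> bool) : (forall k, P (k %% 6) = P k) ->
  (forall k, k < 6 -> P k != P k.+1) -> exists b, forall k, P k = (odd k == b).
Proof.
move=> Pm H; exists (~~ P 0); apply: mod6_ind; first by move=> k; rewrite Pm odd_mod6.
move=> k Hk; move: (H 0 isT) (H 1 isT) (H 2 isT) (H 3 isT) (H 4 isT).
case: k Hk => [|[|[|[|[|[|k]]]]]] // _;
move: (P 0) (P 1) (P 2) (P 3) (P 4) (P 5) => [] [] [] [] [] [] //.
Qed.

Lemma resonant_hex_uniq S X c k e f : resonant S X c -> e \in X -> f \in X ->
  e \in hex_edges c -> f \in hex_edges c ->
  incident (hex_vertex c k) e -> incident (hex_vertex c k) f -> e = f.
Proof.
case=> _ [b Hb] eX fX ec fc ve vf.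
case: (hex_edges_at_vertex ec ve) => Ee; case: (hex_edges_at_vertex fc vf) => Ef;
  rewrite Ee Ef //; exfalso;
 by move: eX fX; rewrite Ee Ef !Hb odd_add5; clear; case: (odd k); case: b.
Qed.

Lemma resonant_of_symdiff S M M' c : perfect_matching S M -> perfect_matching S M' ->
  symdiff M M' = hex_edges c -> c \in S -> resonant S M c.
Proof.
move=> pM pM' E Sc; split => //.
apply: (alternating6 (P := fun k => hex_edge c k \in M)) => [k|k _]; first by rewrite hex_edge_mod.
have := mem_hex_symdiff E (hex_edge c k); have := mem_hex_symdiff E (hex_edge c k.+1).
rewrite !mem_hex_edge.
move: (@pm_hex_edge_succF _ _ c k pM) (@pm_hex_edge_succF _ _ c k pM').
case: (hex_edge c k \in M); case: (hex_edge c k.+1 \in M) => //=.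
  by move=> /(_ isT isT).
by case: (hex_edge c k \in M'); case: (hex_edge c k.+1 \in M') => // _ /(_ isT isT).
Qed.

Lemma resonant_flip S M c : resonant S M c -> resonant S (symdiff M (hex_edges c)) c.
Proof.
case=> Sc [b Hb]; split => //; exists (~~ b) => k.
by rewrite symdiffE Hb mem_hex_edge; clear; case: (odd k); case: b.
Qed.

Lemma pm_flip S M c : perfect_matching S M -> resonant S M c ->
  perfect_matching S (symdiff M (hex_edges c)).
Proof.
move=> pM rM; have rX := resonant_flip rM; have Sc := rM.1.
apply: perfect_matchingI.
- move=> e; rewrite symdiffE; case eM: (e \in M) => /= H; first exact: pm_Hedge pM eM.
  by move: H; rewrite negbK; apply: Hedge_hex.
- move=> v Hv; case vc: (v \in hex_vertices c).
    by have [f fX /andP[_ vf]] := resonant_cover rX vc; exists f.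
  have [e eM ve] := pm_cover pM Hv; exists e => //.
  rewrite symdiffE eM; apply/negP => ec; by rewrite (incident_hex_vertices ec ve) in vc.
- move=> v e f eX fX ve vf.
  have aux : forall g, g \in symdiff M (hex_edges c) -> g \notin hex_edges c -> g \in M.
    by move=> g; rewrite symdiffE => + /negbTE gc; rewrite gc; case: (g \in M).
  case ec: (e \in hex_edges c); case fc: (f \in hex_edges c).
  + have /hex_verticesP [k _ Ev] := incident_hex_vertices ec ve; subst v.
    exact: (resonant_hex_uniq rX eX fX ec fc ve vf).
  + have fM := aux f fX (negbT fc).
    by rewrite (resonant_pm_edge pM rM (incident_hex_vertices ec ve) fM vf) in fc.
  + have eM := aux e eX (negbT ec).
    by rewrite (resonant_pm_edge pM rM (incident_hex_vertices fc vf) eM ve) in ec.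
  + exact: (pm_incident_uniq pM (aux e eX (negbT ec)) (aux f fX (negbT fc)) ve vf).
Qed.

Ltac clash_le1 := match goal with
| Hp : forall i j, _ -> _ -> is_true (?p i) -> is_true (?p j) -> i = j,
  H1 : is_true (?p ?i), H2 : is_true (?p ?j) |- _ =>
   assert_fails (unify i j); have := Hp i j isT isT H1 H2
end.

(** * Four-cycles of the resonance graph *)

Lemma three_le1_not_cover6 (P Q R : nat -> bool) :
  (forall i j, i < 6 -> j < 6 -> P i -> P j -> i = j) ->
  (forall i j, i < 6 -> j < 6 -> Q i -> Q j -> i = j) ->
  (forall i j, i < 6 -> j < 6 -> R i -> R j -> i = j) ->
  ~ (forall k, k < 6 -> [|| P k, Q k | R k]).
Proof.
move=> HP HQ HR cov.
case/or3P: (cov 0 isT) => h0; case/or3P: (cov 1 isT) => h1;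
case/or3P: (cov 2 isT) => h2; case/or3P: (cov 3 isT) => h3; by clash_le1.
Qed.

Lemma hex_share_le1_edge (S : {fset cell}) a x :
  {in S, forall c, valid_cell c} -> a \in S -> x \in S -> x != a ->
  forall i j, i < 6 -> j < 6 ->
  hex_edge a i \in hex_edges x -> hex_edge a j \in hex_edges x -> i = j.
Proof.
move=> VS Sa Sx nxa i j Hi Hj hi hj; apply/eqP; apply/negPn/negP => nij.
have nE : hex_edge a i != hex_edge a j by rewrite eq_hex_edge !modn_small.
have := hex_eq_of_two_edges (VS a Sa) (VS x Sx) nE (mem_hex_edge _ _) (mem_hex_edge _ _) hi hj.
by move/eqP; rewrite (negbTE nxa).
Qed.

Section Square.
Variables (S : {fset cell}) (VS : {in S, forall c, valid_cell c}).
Variables (M1 M2 M3 M4 : {fset edge}) (a b c d : cell).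
Hypotheses (Ea : symdiff M1 M2 = hex_edges a) (Eb : symdiff M2 M3 = hex_edges b)
  (Ec : symdiff M3 M4 = hex_edges c) (Ed : symdiff M4 M1 = hex_edges d).
Hypotheses (Sa : a \in S) (Sb : b \in S) (Sc : c \in S) (Sd : d \in S).
Hypotheses (n13 : M1 != M3) (n24 : M2 != M4).

(* Adding up the four symmetric differences, every edge of [a] lies on [b],
   [c] or [d]; distinct hexagons share at most one edge and [b], [d] differ
   from [a], so [c] must be [a]. *)
Lemma square_opposite_hex : a = c.
Proof.
have xa := mem_hex_symdiff Ea; have xb := mem_hex_symdiff Eb.
have xc := mem_hex_symdiff Ec; have xd := mem_hex_symdiff Ed.
have nab : b != a.
  apply/eqP=> eab; move/eqP: n13; apply; apply/fsetP=> e.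
  move: (xa e) (xb e); rewrite eab => ->; by case: (e \in M1); case: (e \in M2); case: (e \in M3).
have nad : d != a.
  apply/eqP=> eab; move/eqP: n24; apply; apply/fsetP=> e.
  move: (xa e) (xd e); rewrite eab => ->; by case: (e \in M1); case: (e \in M2); case: (e \in M4).
apply/eqP; rewrite eq_sym; apply/negPn/negP => nca.
apply: (three_le1_not_cover6 (P := fun k => hex_edge a k \in hex_edges b)
  (Q := fun k => hex_edge a k \in hex_edges c) (R := fun k => hex_edge a k \in hex_edges d)).
- exact: hex_share_le1_edge VS Sa Sb nab.
- exact: hex_share_le1_edge VS Sa Sc nca.
- exact: hex_share_le1_edge VS Sa Sd nad.
move=> k _; have := mem_hex_edge a k; rewrite xa xb xc xd.
by case: (_ \in M1); case: (_ \in M2); case: (_ \in M3); case: (_ \in M4).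
Qed.
End Square.

Lemma res_square (S : {fset cell}) (VS : {in S, forall c, valid_cell c}) M1 M2 M3 M4 a b c d :
  perfect_matching S M1 -> perfect_matching S M2 ->
  perfect_matching S M3 -> perfect_matching S M4 ->
  symdiff M1 M2 = hex_edges a -> symdiff M2 M3 = hex_edges b ->
  symdiff M3 M4 = hex_edges c -> symdiff M4 M1 = hex_edges d ->
  a \in S -> b \in S -> c \in S -> d \in S -> M1 != M3 -> M2 != M4 ->
  [/\ a = c, b = d & forall v, v \in hex_vertices a -> v \in hex_vertices b -> False].
Proof.
move=> p1 p2 p3 p4 Ea Eb Ec Ed Sa Sb Sc Sd n13 n24.
have ac := square_opposite_hex VS Ea Eb Ec Ed Sa Sb Sc Sd n13 n24.
have n31 : M3 != M1 by rewrite eq_sym.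
have bd := square_opposite_hex VS Eb Ec Ed Ea Sb Sc Sd Sa n24 n31.
(* A common vertex of [a] and [b] would be covered in [M1] and in [M2] by two
   distinct edges lying on both hexagons. *)
split=> // v va vb.
have Ea' : symdiff M2 M1 = hex_edges a by rewrite symdiffC.
have Ed' : symdiff M1 M4 = hex_edges b by rewrite symdiffC bd.
have r2a := resonant_of_symdiff p2 p1 Ea' Sa; have r2b := resonant_of_symdiff p2 p3 Eb Sb.
have r1a := resonant_of_symdiff p1 p2 Ea Sa; have r1b := resonant_of_symdiff p1 p4 Ed' Sb.
have [g gM2 /andP[ga vg]] := resonant_cover r2a va.
have [g' gM1 /andP[ga' vg']] := resonant_cover r1a va.
have gb := resonant_pm_edge p2 r2b vb gM2 vg.
have gb' := resonant_pm_edge p1 r1b vb gM1 vg'.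
have ngg : g != g'.
  apply/eqP=> E; move: ga; by rewrite (mem_hex_symdiff Ea g) gM2 E gM1.
have eab := hex_eq_of_two_edges (VS a Sa) (VS b Sb) ngg ga ga' gb gb'.
move/eqP: n13; apply; apply/fsetP=> e.
move: (mem_hex_symdiff Ea e) (mem_hex_symdiff Eb e); rewrite eab => ->.
by case: (e \in M1); case: (e \in M2); case: (e \in M3).
Qed.

Lemma exists_false (T : finType) (P : pred T) : [exists x, P x] = false -> forall x, ~~ P x.
Proof. by move/negbT/existsPn. Qed.

(** * The hypercube of a family of disjoint alternating hexagons *)

Section Cube.
Variables (S : {fset cell}) (VS : {in S, forall c, valid_cell c}).
Variables (n : nat) (M0 : {fset edge}) (cs : 'I_n -> cell).

Definition on_hexes (A : {set 'I_n}) e := [exists i in A, e \in hex_edges (cs i)].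
Definition hexes_edges := [fset e | i in 'I_n, e in hex_edges (cs i)].
Definition cube_matching (A : {set 'I_n}) :=
  [fset e in M0 `|` hexes_edges | (e \in M0) != on_hexes A e].
Definition resonant_family := [/\ perfect_matching S M0, forall i, resonant S M0 (cs i)
  & forall i j, i != j ->
    forall v, v \in hex_vertices (cs i) -> v \in hex_vertices (cs j) -> False].

Lemma hexes_edgesE e : (e \in hexes_edges) = [exists i, e \in hex_edges (cs i)].
Proof.
apply/imfset2P/existsP; first by case=> i _ [e' H ->]; exists i.
by case=> i H; exists i => //; exists e.
Qed.

Lemma on_hexes_edges A e : on_hexes A e -> e \in hexes_edges.
Proof. by case/existsP=> i /andP[_ H]; rewrite hexes_edgesE; apply/existsP; exists i. Qed.

Lemma cube_matchingE A e : (e \in cube_matching A) = ((e \in M0) != on_hexes A e).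
Proof.
rewrite !inE; case eM: (e \in M0) => //=; case iA: (on_hexes A e); rewrite ?andbT ?andbF //.
exact: (on_hexes_edges iA).
Qed.

Hypothesis rf : resonant_family.

Lemma pm_base : perfect_matching S M0. Proof. by case: rf. Qed.
Lemma resonant_base i : resonant S M0 (cs i). Proof. by case: rf. Qed.
Lemma family_in i : cs i \in S. Proof. by case: (resonant_base i). Qed.

Lemma family_vertex_disj i j v : v \in hex_vertices (cs i) -> v \in hex_vertices (cs j) -> i = j.
Proof.
move=> vi vj; apply/eqP; apply/negPn/negP => nij.
by case: rf => _ _ /(_ i j nij v vi vj).
Qed.

Lemma family_edge_disj i j e : e \in hex_edges (cs i) -> e \in hex_edges (cs j) -> i = j.
Proof.
move=> ei ej; have ve : incident (ends e).1 e by rewrite /incident eqxx.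
exact: family_vertex_disj (incident_hex_vertices ei ve) (incident_hex_vertices ej ve).
Qed.

Lemma on_hexesE A i e : e \in hex_edges (cs i) -> on_hexes A e = (i \in A).
Proof.
move=> ei; apply/existsP/idP; last by move=> iA; exists i; rewrite iA.
by case=> j /andP[jA ej]; rewrite (family_edge_disj ei ej).
Qed.

Lemma on_hexes0 A e : (forall i, e \notin hex_edges (cs i)) -> on_hexes A e = false.
Proof. move=> H; apply/existsP => -[i /andP[_ ei]]; by move: (H i); rewrite ei. Qed.

Lemma resonant_cube_matching A i : resonant S (cube_matching A) (cs i).
Proof.
have [Si [b Hb]] := resonant_base i; split => //; exists (b (+) (i \in A)) => k.
rewrite cube_matchingE Hb (on_hexesE A (mem_hex_edge _ _)).
by clear; case: (odd k); case: b; case: (i \in A).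
Qed.

Lemma family_vertex_cases v :
  {i | v \in hex_vertices (cs i)} + (forall i, v \notin hex_vertices (cs i)).
Proof.
case: (pickP (fun i => v \in hex_vertices (cs i))) => [i Hi|H]; first by left; exists i.
by right => i; rewrite H.
Qed.

Lemma pm_cube_matching A : perfect_matching S (cube_matching A).
Proof.
have p0 := pm_base.
apply: perfect_matchingI.
- move=> e; rewrite cube_matchingE; case eM: (e \in M0) => /= H; first exact: pm_Hedge p0 eM.
  have : on_hexes A e by move: H; case: (on_hexes A e).
  rewrite /on_hexes => /existsP [i /andP[_ ei]]; exact: Hedge_hex (family_in i) ei.
- move=> v Hv; case: (family_vertex_cases v) => [[i vi]|nv].
    by have [f fX /andP[_ vf]] := resonant_cover (resonant_cube_matching A i) vi; exists f.
  have [e eM ve] := pm_cover p0 Hv; exists e => //.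
  rewrite cube_matchingE eM on_hexes0 // => i; apply/negP => ei.
  by move: (nv i); rewrite (incident_hex_vertices ei ve).
- move=> v e f eX fX ve vf.
  case: (family_vertex_cases v) => [[i vi]|nv].
    have inh : forall g, g \in cube_matching A -> incident v g -> g \in hex_edges (cs i).
      move=> g gX vg; case gj: [exists j, g \in hex_edges (cs j)].
        case/existsP: gj => j gj; by rewrite (family_vertex_disj vi (incident_hex_vertices gj vg)).
      have gM : g \in M0.
        move: gX; rewrite cube_matchingE on_hexes0; first by case: (g \in M0).
        exact: (exists_false gj).
      exact: resonant_pm_edge p0 (resonant_base i) vi gM vg.
    have /hex_verticesP [k _ Ev] := vi; subst v.
    exact: resonant_hex_uniq (resonant_cube_matching A i) eX fX (inh e eX ve) (inh f fX vf) ve vf.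
  have nh : forall g, incident v g -> forall i, g \notin hex_edges (cs i).
    by move=> g vg i; apply/negP => gi; move: (nv i); rewrite (incident_hex_vertices gi vg).
  have eM : e \in M0 by move: eX; rewrite cube_matchingE (on_hexes0 _ (nh e ve)); case: (e \in M0).
  have fM : f \in M0 by move: fX; rewrite cube_matchingE (on_hexes0 _ (nh f vf)); case: (f \in M0).
  exact: pm_incident_uniq p0 eM fM ve vf.
Qed.

Lemma cube_matching_inj : injective cube_matching.
Proof.
move=> A B E; apply/setP => i.
have := congr1 (fun X => hex_edge (cs i) 0 \in X) E.
rewrite /= !cube_matchingE !(on_hexesE _ (mem_hex_edge _ _)).
by case: (_ \in M0); case: (i \in A); case: (i \in B).
Qed.

Lemma symdiff_cube_matching A B e :
  (e \in symdiff (cube_matching A) (cube_matching B)) = (on_hexes A e != on_hexes B e).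
Proof.
rewrite symdiffE !cube_matchingE.
by case: (e \in M0); case: (on_hexes A e); case: (on_hexes B e).
Qed.

Lemma symdiff_cube_matching_hex A B e :
  e \in symdiff (cube_matching A) (cube_matching B) -> exists i, e \in hex_edges (cs i).
Proof.
rewrite symdiff_cube_matching => neqAB.
have : on_hexes A e || on_hexes B e by move: neqAB; case: (on_hexes A e); case: (on_hexes B e).
by case/orP => /existsP [i /andP [_ ei]]; exists i.
Qed.

Lemma symdiff_cube_matching1 A B i : ((A :\: B) :|: (B :\: A))%SET = [set i] ->
  symdiff (cube_matching A) (cube_matching B) = hex_edges (cs i).
Proof.
move=> Di; apply/fsetP=> e; rewrite symdiff_cube_matching.
case he: [exists j, e \in hex_edges (cs j)]; last first.
  rewrite !on_hexes0; try exact: (exists_false he).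
  by apply/esym/negbTE; exact: (exists_false he).
case/existsP: he => j ej; rewrite !(on_hexesE _ ej).
have -> : (j \in A) != (j \in B) = (j \in ((A :\: B) :|: (B :\: A))%SET).
  by rewrite !inE; case: (j \in A); case: (j \in B).
rewrite Di inE; apply/eqP/idP => [E|ei]; [by rewrite -E | exact: family_edge_disj ej ei].
Qed.

Lemma cube_adj_of_symdiff A B d : d \in S ->
  symdiff (cube_matching A) (cube_matching B) = hex_edges d -> cube_adj A B.
Proof.
move=> Sd E; set D := ((A :\: B) :|: (B :\: A))%SET.
have inD j : (j \in D) = ((j \in A) != (j \in B)).
  by rewrite !inE; case: (j \in A); case: (j \in B).
have Dd j : j \in D -> cs j = d.
  move=> jD; have sub k : hex_edge (cs j) k \in hex_edges d.
    by rewrite -E symdiff_cube_matching !(on_hexesE _ (mem_hex_edge _ _)) -inD.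
  apply/esym/(hex_eq_of_two_edges (VS (family_in j)) (VS Sd) (hex_edge_neq_succ _ 0));
    [exact: mem_hex_edge | exact: mem_hex_edge | exact: sub | exact: sub].
have e0 : hex_edge d 0 \in symdiff (cube_matching A) (cube_matching B).
  by rewrite E mem_hex_edge.
have [j ej] := symdiff_cube_matching_hex e0.
have jD : j \in D by move: e0; rewrite symdiff_cube_matching !(on_hexesE _ ej) inD.
apply/cards1P; exists j; apply/setP => j'; rewrite inE; apply/idP/eqP => [j'D|->//].
by apply: (family_vertex_disj (v := hex_vertex d 0)); rewrite ?Dd // mem_hex_vertex.
Qed.

Lemma res_adj_cube_matching A B :
  res_adj S (cube_matching A) (cube_matching B) <-> cube_adj A B.
Proof.
split=> [[d Sd E]|/cards1P [i Di]]; first exact: cube_adj_of_symdiff Sd E.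
by exists (cs i); [exact: family_in | exact: symdiff_cube_matching1].
Qed.

Definition cube := [fset cube_matching A | A in {: {set 'I_n}}].

Lemma mem_cube M : M \in cube <-> exists A, cube_matching A = M.
Proof.
split; first by case/imfsetP => A _ ->; exists A.
by case=> A <-; apply/imfsetP; exists A.
Qed.

Lemma hypercube_cube : hypercube_in S cube.
Proof.
split; first by move=> M /mem_cube [A <-]; apply: pm_cube_matching.
exists n, cube_matching.
by split; [exact: cube_matching_inj | exact: mem_cube | exact: res_adj_cube_matching].
Qed.
End Cube.

Lemma set_ind n (P : {set 'I_n} -> Prop) : P set0 ->
  (forall (A : {set 'I_n}) i, i \notin A -> P A -> P (i |: A)) -> forall A, P A.
Proof.
move=> H0 HS A; move Hk: #|A| => k; elim: k A Hk => [|k IH] A Hk.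
  by move/eqP: Hk; rewrite cards_eq0 => /eqP ->.
have : A != set0 by rewrite -card_gt0 Hk.
case/set0Pn => i iA.
rewrite -(setD1K iA); apply: HS; first by rewrite !inE eqxx.
apply: IH; move: Hk; rewrite (cardsD1 i A) iA; by case.
Qed.

Lemma cube_adj_setU1 n (X : {set 'I_n}) k :
  k \notin X -> cube_adj X (k |: X) /\ cube_adj (k |: X) X.
Proof.
move=> kX; have E : forall Y Z : {set 'I_n}, Y = X -> Z = k |: X ->
    ((Y :\: Z) :|: (Z :\: Y))%SET = [set k].
  move=> Y Z -> ->; apply/setP => j; rewrite !inE.
  by case: (j =P k) => [->|]; rewrite ?(negbTE kX) //=; case: (j \in X).
split; first by rewrite /cube_adj (E X (k |: X)) // cards1.
by rewrite /cube_adj (setUC ((k |: X) :\: X)) (E X (k |: X)) // cards1.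
Qed.

Section Hyp.
Variables (S : {fset cell}) (VS : {in S, forall c, valid_cell c}).
Variables (U : {fset {fset edge}}) (n : nat) (phi : {set 'I_n} -> {fset edge}).
Hypotheses (pmU : forall M, M \in U -> perfect_matching S M) (inj : injective phi)
  (memb : forall M, M \in U <-> exists A, phi A = M)
  (adj : forall A B, res_adj S (phi A) (phi B) <-> cube_adj A B).

Lemma pm_phi A : perfect_matching S (phi A).
Proof. apply: pmU; apply/memb; by exists A. Qed.

Lemma hypercube_hex_ex i : {c | c \in S /\ symdiff (phi set0) (phi (i |: set0)) = hex_edges c}.
Proof.
apply: constructive_indefinite_description.
have [H _] := cube_adj_setU1 (negbT (in_set0 i)).
by case/adj: H => c Sc E; exists c.
Qed.

Definition hypercube_hex i := proj1_sig (hypercube_hex_ex i).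
Lemma hypercube_hex_in i : hypercube_hex i \in S.
Proof. by case: (proj2_sig (hypercube_hex_ex i)). Qed.
Lemma hypercube_hexE i : symdiff (phi set0) (phi (i |: set0)) = hex_edges (hypercube_hex i).
Proof. by case: (proj2_sig (hypercube_hex_ex i)). Qed.

Lemma cube_adj_hex X Y : cube_adj X Y -> exists2 c, c \in S & symdiff (phi X) (phi Y) = hex_edges c.
Proof. by case/adj => c Sc E; exists c. Qed.

(* Induction on [A] through the squares phi A, phi (i |: A),
   phi (j |: i |: A), phi (j |: A). *)
Lemma symdiff_phi_setU1 : forall (A : {set 'I_n}) i,
  i \notin A -> symdiff (phi A) (phi (i |: A)) = hex_edges (hypercube_hex i).
Proof.
apply: set_ind; first by move=> i _; apply: hypercube_hexE.
move=> A j jA IH i iA.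
have ij : i != j by apply/eqP => E; move: iA; rewrite E !inE eqxx.
have iA' : i \notin A by move: iA; rewrite !inE negb_or => /andP[].
have jiA : j \notin i |: A by rewrite !inE negb_or eq_sym ij.
have Ea := IH i iA'.
have [c2 S2 Eb] := cube_adj_hex (cube_adj_setU1 jiA).1.
have ijA : i \notin j |: A by rewrite !inE negb_or ij.
have [c3 S3 Ec] := cube_adj_hex (cube_adj_setU1 ijA).2.
rewrite setUCA in Ec.
have [c4 S4 Ed] := cube_adj_hex (cube_adj_setU1 jA).2.
have n13 : phi A != phi (j |: (i |: A)).
  apply/eqP => /inj E; move: jA; by rewrite E !inE eqxx.
have n24 : phi (i |: A) != phi (j |: A).
  apply/eqP => /inj E; move: ijA; by rewrite -E !inE eqxx.
have [ac _ _] := res_square VS (pm_phi _) (pm_phi _) (pm_phi _) (pm_phi _) Ea Eb Ec Ed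
  (hypercube_hex_in i) S2 S3 S4 n13 n24.
by rewrite setUCA symdiffC Ec ac.
Qed.

Lemma resonant_family_hypercube : resonant_family S (phi set0) hypercube_hex.
Proof.
split; first exact: pm_phi.
  move=> i; exact: resonant_of_symdiff (pm_phi _) (pm_phi _) (hypercube_hexE i)
    (hypercube_hex_in i).
move=> i j ij v vi vj.
have ji : j \notin i |: set0 by rewrite !inE negb_or eq_sym ij.
have Eb := symdiff_phi_setU1 ji.
have ij' : i \notin j |: set0 by rewrite !inE negb_or ij.
have [c3 S3 Ec] := cube_adj_hex (cube_adj_setU1 ij').2.
rewrite setUCA in Ec.
have Ed : symdiff (phi (j |: set0)) (phi set0) = hex_edges (hypercube_hex j).
  by rewrite symdiffC hypercube_hexE.
have n13 : phi set0 != phi (j |: (i |: set0)).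
  apply/eqP => /inj /setP /(_ j); by rewrite !inE eqxx.
have n24 : phi (i |: set0) != phi (j |: set0).
  apply/eqP => /inj /setP /(_ i); by rewrite !inE eqxx (negbTE ij).
have [_ _ disj] := res_square VS (pm_phi _) (pm_phi _) (pm_phi _) (pm_phi _) (hypercube_hexE i)
  Eb Ec Ed (hypercube_hex_in i) (hypercube_hex_in j) S3 (hypercube_hex_in j) n13 n24.
exact: disj vi vj.
Qed.

Lemma phi_cube_matching : forall A, phi A = cube_matching (phi set0) hypercube_hex A.
Proof.
have rf := resonant_family_hypercube.
apply: set_ind.
  apply/fsetP => e; rewrite cube_matchingE.
  have -> : on_hexes hypercube_hex set0 e = false by apply/negbTE/existsP => -[i]; rewrite inE.
  by case: (e \in phi set0).
move=> A i iA IH; apply/fsetP => e.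
have K := mem_hex_symdiff (symdiff_phi_setU1 iA) e.
have -> : (e \in phi (i |: A)) = ((e \in phi A) != (e \in hex_edges (hypercube_hex i))).
  by rewrite K; case: (e \in phi A); case: (e \in phi (i |: A)).
rewrite IH !cube_matchingE.
case he: [exists j, e \in hex_edges (hypercube_hex j)]; last first.
  rewrite !on_hexes0; try exact: exists_false he.
  by rewrite (negbTE (exists_false he i)); case: (_ \in _).
case/existsP: he => j ej; rewrite !(on_hexesE rf _ ej) !inE.
case: (i =P j) => [E|nij].
  subst j; by rewrite ej eqxx (negbTE iA); case: (_ \in _).
have -> : (e \in hex_edges (hypercube_hex i)) = false.
  by apply/negP => ei; apply: nij; apply: (family_edge_disj rf ei ej).
have -> : (j == i) = false by apply/eqP => E; apply: nij; rewrite E.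
by case: (_ \in phi set0); case: (j \in A).
Qed.

Lemma hypercube_cube_eq : U = cube (phi set0) hypercube_hex.
Proof.
apply/fsetP => M; apply/idP/idP.
  case/memb => A <-; apply/(mem_cube (phi set0) hypercube_hex).
  by exists A; exact/esym/phi_cube_matching.
case/(mem_cube (phi set0) hypercube_hex) => A <-; apply/memb; exists A; exact/phi_cube_matching.
Qed.
End Hyp.

Lemma hypercube_rep (S : {fset cell}) (VS : {in S, forall c, valid_cell c}) U :
  hypercube_in S U ->
  exists n (M0 : {fset edge}) (cs : 'I_n -> cell), resonant_family S M0 cs /\ U = cube M0 cs.
Proof.
case=> pmU [n [phi [inj memb adj]]].
exists n, (phi set0), (hypercube_hex adj); split.
  exact: (resonant_family_hypercube VS pmU inj memb adj).
exact: (hypercube_cube_eq VS pmU inj memb adj).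
Qed.

(** * Clar covers *)

Definition asbool (P : Prop) : bool := if excluded_middle_informative P then true else false.
Lemma asboolP P : reflect P (asbool P).
Proof. by rewrite /asbool; case: excluded_middle_informative => H; constructor. Qed.

Definition matchings_in (S : {fset cell}) (F : {fset edge}) :=
  [fset M in fpowerset F | asbool (perfect_matching S M)].
Lemma mem_matchings_in S F M : M \in matchings_in S F <-> M `<=` F /\ perfect_matching S M.
Proof.
rewrite !inE fpowersetE; split; first by case/andP => -> /asboolP.
by case=> -> H; apply/asboolP.
Qed.

Lemma resonant_hex_comp S F M c :
  perfect_matching S M -> M `<=` F -> hex_comp S F c -> resonant S M c.
Proof.
move=> pM MF [Sc cF cl]; split => //.
apply: (alternating6 (P := fun k => hex_edge c k \in M)); first by move=> k; rewrite hex_edge_mod.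
move=> k _.
have [g gM vg] := pm_cover pM (ex_intro2 _ _ c Sc (mem_hex_vertex c k.+1)).
have gc : g \in hex_edges c.
  apply: cl; first exact: (fsubsetP MF).
  by exists (hex_vertex c k.+1) => //; apply: mem_hex_vertex.
have Hg : g = hex_edge c k.+1 \/ g = hex_edge c k.
  case: (hex_edges_at_vertex gc vg) => ->; [by left | right].
  by rewrite -hex_edge_mod -[RHS]hex_edge_mod; congr hex_edge; lia.
case E1: (hex_edge c k \in M); case E2: (hex_edge c k.+1 \in M) => //.
  by case: (pm_hex_edge_succF pM E1 E2).
by case: Hg => Eg; move: gM; rewrite Eg ?E1 ?E2.
Qed.

Section Clar.
Variable S : {fset cell}.
Variables (n : nat) (M0 : {fset edge}) (cs : 'I_n -> cell).
Hypothesis rf : resonant_family S M0 cs.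

Definition clar_of := M0 `|` hexes_edges cs.

Lemma clar_ofE e : (e \in clar_of) = (e \in M0) || [exists i, e \in hex_edges (cs i)].
Proof. by rewrite /clar_of inE hexes_edgesE. Qed.

Lemma base_edge_at_hex i v f :
  v \in hex_vertices (cs i) -> f \in M0 -> incident v f -> f \in hex_edges (cs i).
Proof. move=> vi fM vf; exact: resonant_pm_edge (pm_base rf) (resonant_base rf i) vi fM vf. Qed.

Lemma hex_comp_clar_of i : hex_comp S clar_of (cs i).
Proof.
split; first exact: family_in rf i.
  by apply/fsubsetP => e ei; rewrite clar_ofE; apply/orP; right; apply/existsP; exists i.
move=> f; rewrite clar_ofE => /orP[fM|/existsP[j fj]] [v vi vf].
  exact: base_edge_at_hex vi fM vf.
by rewrite (family_vertex_disj rf vi (incident_hex_vertices fj vf)).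
Qed.

Lemma clar_cover_clar_of : clar_cover S clar_of.
Proof.
split.
- move=> e; rewrite clar_ofE => /orP[eM|/existsP[j ej]]; first exact: pm_Hedge (pm_base rf) eM.
  exact: Hedge_hex (family_in rf j) ej.
- move=> v Hv; have [e eM ve] := pm_cover (pm_base rf) Hv; exists e => //.
  by rewrite clar_ofE eM.
- move=> e eF; case he: [exists i, e \in hex_edges (cs i)].
    by case/existsP: he => i ei; right; exists (cs i) => //; apply: hex_comp_clar_of.
  have eM : e \in M0 by move: eF; rewrite clar_ofE he orbF.
  left; split => // f fF tef.
  have [v ve vf] : exists2 v, incident v e & incident v f.
    move: tef; rewrite /touch => /orP[H|H]; [exists (ends e).1|exists (ends e).2] => //;
    by rewrite /incident eqxx ?orbT.
  move: fF; rewrite clar_ofE => /orP[fM|/existsP[j fj]].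
    exact: pm_incident_uniq (pm_base rf) fM eM vf ve.
  have vj := incident_hex_vertices fj vf.
  by move: (exists_false he j); rewrite (base_edge_at_hex vj eM ve).
Qed.

Lemma sub_clar_ofP M :
  (M `<=` clar_of /\ perfect_matching S M) <-> exists A, cube_matching M0 cs A = M.
Proof.
split; last first.
  case=> A <-; split; last exact: pm_cube_matching rf A.
  by apply/fsubsetP => e; rewrite inE => /andP[].
case=> MF pM.
have rM : forall i, resonant S M (cs i).
  move=> i; exact: resonant_hex_comp pM MF (hex_comp_clar_of i).
exists [set i | (hex_edge (cs i) 0 \in M) != (hex_edge (cs i) 0 \in M0)].
apply/fsetP => e; rewrite cube_matchingE.
case he: [exists i, e \in hex_edges (cs i)].
  case/existsP: he => i ei; rewrite (on_hexesE rf _ ei) inE.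
  have [_ [b Hb]] := rM i; have [_ [b0 Hb0]] := resonant_base rf i.
  case/hex_edgesP: ei => k _ ->; rewrite !Hb !Hb0.
  by clear; case: (odd k); case: b; case: b0.
rewrite on_hexes0; last exact: exists_false he.
have -> : ((e \in M0) != false) = (e \in M0) by case: (e \in M0).
apply/idP/idP => [eM|eM]; last by move: (fsubsetP MF e eM); rewrite clar_ofE he orbF.
have ve : incident (ends e).1 e by rewrite /incident eqxx.
have [f fM vf] := pm_cover pM (Hvtx_incident (pm_Hedge (pm_base rf) eM) ve).
move: (fsubsetP MF f fM); rewrite clar_ofE => /orP[fM0|/existsP[j fj]].
  by rewrite (pm_incident_uniq (pm_base rf) eM fM0 ve vf).
have vj := incident_hex_vertices fj vf.
by move: (exists_false he j); rewrite (base_edge_at_hex vj eM ve).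
Qed.

Lemma matchings_in_clar_of : matchings_in S clar_of = cube M0 cs.
Proof.
apply/fsetP => M; apply/idP/idP.
  by move/mem_matchings_in/sub_clar_ofP/(mem_cube M0 cs M).
by move/(mem_cube M0 cs M)/sub_clar_ofP/mem_matchings_in.
Qed.

Lemma clar_of_covered e : e \in clar_of -> exists2 M, M \in cube M0 cs & e \in M.
Proof.
rewrite clar_ofE => /orP[eM|/existsP[i ei]].
  exists (cube_matching M0 cs set0); first by apply/(mem_cube M0 cs); exists set0.
  by rewrite cube_matchingE eM; apply/negP => /existsP [i]; rewrite inE.
case eM: (e \in M0).
  exists (cube_matching M0 cs set0); first by apply/(mem_cube M0 cs); exists set0.
  by rewrite cube_matchingE eM (on_hexesE rf _ ei) inE.
exists (cube_matching M0 cs [set i]); first by apply/(mem_cube M0 cs); exists [set i].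
by rewrite cube_matchingE eM (on_hexesE rf _ ei) inE eqxx.
Qed.
End Clar.

Lemma hex_edge_not_single F c k : hex_edges c `<=` F -> ~ single_comp F (hex_edge c k).
Proof.
move=> cF [_ single].
have := single _ (fsubsetP cF _ (mem_hex_edge c k.+1))
  (touch_incident (incident_hex_vertex_succ c k) (incident_hex_vertex _ _)).
by move/eqP; rewrite eq_sym (negbTE (hex_edge_neq_succ c k)).
Qed.

Section ClarRep.
Variables (S : {fset cell}) (VS : {in S, forall c, valid_cell c}).
Variables (F : {fset edge}) (CF : clar_cover S F).

Lemma hex_comp_disj c c' v : hex_comp S F c -> hex_comp S F c' ->
  v \in hex_vertices c -> v \in hex_vertices c' -> c = c'.
Proof.
move=> [Sc cF clc] [Sc' cF' _] vc /hex_verticesP [k _ Ev]; subst v.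
have h1 : hex_edge c' k \in hex_edges c.
  apply: clc; first exact: (fsubsetP cF' _ (mem_hex_edge _ _)).
  by exists (hex_vertex c' k) => //; apply: incident_hex_vertex.
have h2 : hex_edge c' (k + 5) \in hex_edges c.
  apply: clc; first exact: (fsubsetP cF' _ (mem_hex_edge _ _)).
  by exists (hex_vertex c' k) => //; apply: incident_hex_vertex_pred.
have ne : hex_edge c' k != hex_edge c' (k + 5) by rewrite eq_hex_edge; lia.
exact: hex_eq_of_two_edges (VS Sc') (VS Sc) ne (mem_hex_edge _ _) (mem_hex_edge _ _) h1 h2.
Qed.

Definition clar_hexes := [fset c in S | asbool (hex_comp S F c)].
Lemma mem_clar_hexes c : c \in clar_hexes <-> hex_comp S F c.
Proof.
rewrite !inE; split; first by case/andP => _ /asboolP.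
by move=> H; apply/andP; split; [case: H | apply/asboolP].
Qed.

Definition nclar := size clar_hexes.
Definition clar_hex (i : 'I_nclar) : cell := nth (0%R, 0%R) clar_hexes i.

Lemma hex_comp_clar_hex i : hex_comp S F (clar_hex i).
Proof. apply/mem_clar_hexes; exact: mem_nth. Qed.

Lemma clar_hexP c : hex_comp S F c -> exists i, clar_hex i = c.
Proof.
move/mem_clar_hexes => cH; have Hi : index c clar_hexes < nclar by rewrite /nclar index_mem.
by exists (Ordinal Hi); rewrite /clar_hex nth_index.
Qed.

Lemma clar_hex_inj i j : clar_hex i = clar_hex j -> i = j.
Proof.
move=> /eqP; rewrite /clar_hex nth_uniq ?fset_uniq //; first by move/eqP/val_inj.
Qed.

Definition even_hex_edge c e := [exists k : 'I_6, ~~ odd k && (e == hex_edge c k)].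
Definition clar_matching :=
  [fset e in F | asbool (single_comp F e) || [exists i, even_hex_edge (clar_hex i) e]].

Lemma clar_matchingE e : (e \in clar_matching) =
  (e \in F) && (asbool (single_comp F e) || [exists i, even_hex_edge (clar_hex i) e]).
Proof. by rewrite !inE. Qed.

Lemma resonant_clar_matching i : resonant S clar_matching (clar_hex i).
Proof.
have [Sc cF clc] := hex_comp_clar_hex i.
split => //; exists false => k; rewrite clar_matchingE (fsubsetP cF _ (mem_hex_edge _ _)) /=.
case ok: (odd k) => /=.
  apply/negbTE; rewrite negb_or; apply/andP; split.
    by apply/negP => /asboolP; apply: hex_edge_not_single cF.
  apply/negP => /existsP [j /existsP [l /andP [ol /eqP E]]].
  have vj : hex_vertex (clar_hex i) k \in hex_vertices (clar_hex j).
    apply: (incident_hex_vertices (e := hex_edge (clar_hex i) k)); last exact: incident_hex_vertex.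
    by rewrite E mem_hex_edge.
  have cij := hex_comp_disj (hex_comp_clar_hex i) (hex_comp_clar_hex j) (mem_hex_vertex _ k) vj.
  move: E; rewrite -cij => /eqP; rewrite eq_hex_edge => /eqP E.
  by move: ol; rewrite -odd_mod6 -E odd_mod6 ok.
apply/orP; right; apply/existsP; exists i; apply/existsP.
have Hk : (k %% 6 < 6)%N by rewrite ltn_mod.
exists (Ordinal Hk); by rewrite /= odd_mod6 ok hex_edge_mod eqxx.
Qed.

Lemma pm_clar_matching : perfect_matching S clar_matching.
Proof.
have [CE CV CC] := CF.
have M0F : forall e, e \in clar_matching -> e \in F by move=> e; rewrite clar_matchingE => /andP[].
have inhex e : e \in clar_matching -> ~ single_comp F e -> exists i, e \in hex_edges (clar_hex i).
  rewrite clar_matchingE => /andP[_ /orP[/asboolP //|]].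
  move=> /existsP [i /existsP [k /andP[_ /eqP ->]]] _.
  by exists i; apply: mem_hex_edge.
apply: perfect_matchingI.
- by move=> e /M0F /CE.
- move=> v Hv; have [e eF ve] := CV v Hv.
  case: (CC e eF) => [se|[c hc ec]].
    by exists e => //; rewrite clar_matchingE eF; apply/orP; left; apply/asboolP.
  have [i Ei] := clar_hexP hc; subst c.
  have vc := incident_hex_vertices ec ve.
  have [f fM /andP[_ vf]] := resonant_cover (resonant_clar_matching i) vc.
  by exists f.
- move=> v e f eM fM ve vf.
  case: (excluded_middle_informative (single_comp F e)) => [se|nse].
    exact/esym/(single_comp_uniq se (M0F _ fM) ve vf).
  case: (excluded_middle_informative (single_comp F f)) => [sf|nsf].
    exact: (single_comp_uniq sf (M0F _ eM) vf ve).
  have [i ei] := inhex e eM nse; have [j fj] := inhex f fM nsf.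
  have vi := incident_hex_vertices ei ve; have vj := incident_hex_vertices fj vf.
  have cij := hex_comp_disj (hex_comp_clar_hex i) (hex_comp_clar_hex j) vi vj.
  rewrite -cij in fj.
  have /hex_verticesP [k _ Ev] := vi; subst v.
  exact: resonant_hex_uniq (resonant_clar_matching i) eM fM ei fj ve vf.
Qed.

Lemma resonant_family_clar : resonant_family S clar_matching clar_hex.
Proof.
split; [exact: pm_clar_matching | exact: resonant_clar_matching |].
move=> i j ij v vi vj; move: ij.
by rewrite (clar_hex_inj (hex_comp_disj (hex_comp_clar_hex i) (hex_comp_clar_hex j) vi vj)) eqxx.
Qed.

Lemma clar_of_clar_matching : F = clar_of clar_matching clar_hex.
Proof.
have [CE CV CC] := CF.
apply/fsetP => e; rewrite clar_ofE; apply/idP/idP => [eF|].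
  case: (CC e eF) => [se|[c hc ec]].
    by rewrite clar_matchingE eF; apply/orP; left; apply/orP; left; apply/asboolP.
  have [i Ei] := clar_hexP hc; subst c.
  by apply/orP; right; apply/existsP; exists i.
case/orP => [|/existsP [i ei]]; first by rewrite clar_matchingE => /andP[].
by have [_ cF _] := hex_comp_clar_hex i; apply: (fsubsetP cF).
Qed.
End ClarRep.

Lemma clar_rep (S : {fset cell}) (VS : {in S, forall c, valid_cell c}) F : clar_cover S F ->
  exists n (M0 : {fset edge}) (cs : 'I_n -> cell), resonant_family S M0 cs /\ F = clar_of M0 cs.
Proof.
move=> CF; have rf := resonant_family_clar VS CF; have E := clar_of_clar_matching CF.
by do 3 eexists; split; [exact: rf | exact: E].
Qed.

(** * Maximality and alternating hexagons *)

Lemma alternating_single_parity F c :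
  (exists e1 e2 e3,
    [/\ e1 \in hex_edges c, e2 \in hex_edges c, e3 \in hex_edges c,
        ~~ touch e1 e2 /\ ~~ touch e1 e3 /\ ~~ touch e2 e3
      & single_comp F e1 /\ single_comp F e2 /\ single_comp F e3]) ->
  exists b, forall k, odd k = b -> single_comp F (hex_edge c k).
Proof.
case=> e1 [e2 [e3 [h1 h2 h3 [t12 [t13 t23]] [s1 [s2 s3]]]]].
case/hex_edgesP: h1 => k1 K1 E1; case/hex_edgesP: h2 => k2 K2 E2.
case/hex_edgesP: h3 => k3 K3 E3; rewrite E1 E2 E3 in t12 t13 t23 s1 s2 s3.
exists (odd k1) => k ok; rewrite -hex_edge_mod.
have := non_touching_parity K1 K2 K3 t12 t13 t23 (ltn_mod k 6).
by rewrite odd_mod6 ok => /(_ erefl) [] ->.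
Qed.

Lemma alternating_hexI (S : {fset cell}) F c b : c \in S -> ~ hex_comp S F c ->
  (forall k, odd k = b -> single_comp F (hex_edge c k)) -> alternating_hex S F.
Proof.
move=> Sc nhc single; exists c; split => //.
exists (hex_edge c b), (hex_edge c (b + 2)), (hex_edge c (b + 4)).
split; try exact: mem_hex_edge; first by rewrite !touch_hex_edges; clear single; case: b.
by split; [|split]; apply: single; rewrite ?oddD /=; case: b.
Qed.

Lemma symdiff_hex_sub (S : {fset cell}) F M c : M `<=` F -> hex_comp S F c ->
  symdiff M (hex_edges c) `<=` F.
Proof.
move=> MF [_ cF _]; apply/fsubsetP => e; rewrite symdiffE.
by case: (e \in M) / idP => [/(fsubsetP MF)|_ /negPn/(fsubsetP cF)].
Qed.

Lemma matchings_inS S F1 F2 : F1 `<=` F2 -> matchings_in S F1 `<=` matchings_in S F2.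
Proof.
move=> F12; apply/fsubsetP => M /mem_matchings_in [MF pM]; apply/mem_matchings_in.
by split=> //; exact: fsubset_trans F12.
Qed.

Section ClarMaximal.
Variables (S : {fset cell}) (F : {fset edge}) (CF : clar_cover S F).
Variables (n : nat) (M1 : {fset edge}) (cs : 'I_n -> cell).
Hypothesis rf : resonant_family S M1 cs.
Hypothesis cube_of_sub : forall M, M `<=` F -> perfect_matching S M ->
  exists A, cube_matching M1 cs A = M.
Variables (M0 : {fset edge}) (A0 : {set 'I_n}).
Hypotheses (M0F : M0 `<=` F) (EA0 : cube_matching M1 cs A0 = M0).

(* If the edge lay on a hexagon component [c] of [F], flipping [c] in [M0]
   would stay in [F], hence in the larger cube; [c] would then be the union of
   coordinate hexagons where the two flips differ, and would contain [e]. *)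
Lemma base_edge_single j e k : e \in hex_edges (cs j) -> e \notin F ->
  hex_edge (cs j) k \in M0 -> single_comp F (hex_edge (cs j) k).
Proof.
move=> ej eF kM0; have [_ _ CC] := CF.
case: (CC _ (fsubsetP M0F _ kM0)) => // [[c hc kc]]; exfalso.
have pM0 : perfect_matching S M0 by rewrite -EA0; exact: pm_cube_matching rf A0.
have [B EB] := cube_of_sub (symdiff_hex_sub M0F hc)
  (pm_flip pM0 (resonant_hex_comp pM0 M0F hc)).
have onc g : (g \in hex_edges c) = (on_hexes cs A0 g != on_hexes cs B g).
  by rewrite -(symdiff_cube_matching M1) EA0 EB symdiffK.
have jAB : (j \in A0) != (j \in B).
  by move: kc; rewrite onc !(on_hexesE rf _ (mem_hex_edge _ _)).
have [_ cF _] := hc.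
by move: eF; rewrite (fsubsetP cF) // onc !(on_hexesE rf _ ej).
Qed.

Lemma alternating_of_outside_edge j e : e \in hex_edges (cs j) -> e \notin F ->
  alternating_hex S F.
Proof.
move=> ej eF.
have [Sj [b Hb]] : resonant S M0 (cs j) by rewrite -EA0; exact: resonant_cube_matching rf A0 j.
apply: (alternating_hexI (c := cs j) (b := b)) => // [[_ cF _]|k ok].
  by move: eF; rewrite (fsubsetP cF).
by apply: (base_edge_single ej eF); rewrite Hb ok.
Qed.
End ClarMaximal.

Lemma maximal_hypercube_of_clar (S : {fset cell}) (VS : {in S, forall c, valid_cell c}) F :
  clar_cover S F -> ~ alternating_hex S F -> maximal_hypercube S (matchings_in S F).
Proof.
move=> CF NA; have [n [M0 [cs [rf EF]]]] := clar_rep VS CF.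
split; first by rewrite EF (matchings_in_clar_of rf); exact: (hypercube_cube VS rf).
case=> U [HU ltFU]; have [n' [M1 [cs' [rf' EU]]]] := hypercube_rep VS HU.
have cube_of_sub M : M `<=` F -> perfect_matching S M -> exists A, cube_matching M1 cs' A = M.
  move=> MF pM; apply/(mem_cube M1 cs'); rewrite -EU.
  by apply: (fsubsetP (fproper_sub ltFU)); exact/mem_matchings_in.
have M0F : M0 `<=` F by rewrite EF; apply/fsubsetP => e eM; rewrite clar_ofE eM.
have [A0 EA0] := cube_of_sub M0 M0F (pm_base rf).
have [M MU MnF] : exists2 M, M \in U & M \notin matchings_in S F.
  by apply/fsubsetPn; move: ltFU; rewrite fproperE => /andP[].
move: MU; rewrite EU => /(mem_cube M1 cs') [B EB].
have [e eM eF] : exists2 e, e \in M & e \notin F.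
  apply/fsubsetPn; apply: contra MnF => MF; apply/mem_matchings_in; split=> //.
  by rewrite -EB; exact: pm_cube_matching rf' B.
have [j ej] : exists j, e \in hex_edges (cs' j).
  apply: (symdiff_cube_matching_hex (M0 := M1) (A := B) (B := A0)).
  by rewrite symdiffE EB EA0 eM; apply: contraNN eF; apply: (fsubsetP M0F).
exact: NA (alternating_of_outside_edge CF rf' cube_of_sub M0F EA0 ej eF).
Qed.

Lemma flip_not_sub F M0 d b : (forall k, (hex_edge d k \in M0) = (odd k == b)) ->
  (forall k, odd k = b -> single_comp F (hex_edge d k)) ->
  ~ symdiff M0 (hex_edges d) `<=` F.
Proof.
move=> Hb single XF.
have odd_nb : odd (~~ b : nat) = ~~ b by case: b {Hb single}.
have inX : hex_edge d (~~ b) \in symdiff M0 (hex_edges d).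
  by rewrite symdiffE Hb mem_hex_edge odd_nb; case: b {Hb single odd_nb}.
have oddS : odd (~~ b : nat).+1 = b by rewrite /= odd_nb negbK.
have := single_comp_uniq (single _ oddS) (fsubsetP XF _ inX) (incident_hex_vertex _ _)
  (incident_hex_vertex_succ d (~~ b)).
by move/eqP; rewrite (negbTE (hex_edge_neq_succ d _)).
Qed.

Definition ext_family n (cs : 'I_n -> cell) (d : cell) (i : 'I_(n + 1)) : cell :=
  if split i is inl j then cs j else d.

Lemma resonant_family_ext S M0 n (cs : 'I_n -> cell) d :
  resonant_family S M0 cs -> resonant S M0 d ->
  (forall j v, v \in hex_vertices d -> v \in hex_vertices (cs j) -> False) ->
  resonant_family S M0 (ext_family cs d).
Proof.
move=> rf rd disj; split => [|i|i i' ii' v]; first exact: pm_base rf.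
  by rewrite /ext_family; case: (split i) => [j|_]; [exact: resonant_base rf j|exact: rd].
rewrite /ext_family; case Ei: (split i) => [j|x]; case Ei': (split i') => [j'|x'] vi vj.
- have E := family_vertex_disj rf vi vj; subst j'.
  by move: ii'; rewrite -(splitK i) -(splitK i') Ei Ei' eqxx.
- exact: disj vj vi.
- exact: disj vi vj.
- by move: ii'; rewrite -(splitK i) -(splitK i') Ei Ei' (ord1 x) (ord1 x') eqxx.
Qed.

Lemma clar_of_ext M0 n (cs : 'I_n -> cell) d :
  clar_of M0 cs `<=` clar_of M0 (ext_family cs d).
Proof.
apply/fsubsetP => e; rewrite !clar_ofE => /orP[->//|/existsP [i ei]].
by apply/orP; right; apply/existsP; exists (unsplit (inl i)); rewrite /ext_family unsplitK.
Qed.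

Lemma flip_sub_clar_of_ext M0 n (cs : 'I_n -> cell) d :
  symdiff M0 (hex_edges d) `<=` clar_of M0 (ext_family cs d).
Proof.
apply/fsubsetP => e; rewrite symdiffE clar_ofE; case: (e \in M0) => //= /negPn ed.
by apply/existsP; exists (unsplit (inr ord0)); rewrite /ext_family unsplitK.
Qed.

Section ClarOfFamily.
Variables (S : {fset cell}) (n : nat) (M0 : {fset edge}) (cs : 'I_n -> cell).
Hypothesis rf : resonant_family S M0 cs.
Local Notation F := (clar_of M0 cs).

Lemma single_comp_clar_of e :
  single_comp F e -> e \in M0 /\ forall i, e \notin hex_edges (cs i).
Proof.
move=> se; have offH i : e \notin hex_edges (cs i).
  apply/negP => /hex_edgesP [m _ Em]; rewrite Em in se.
  by case: (hex_comp_clar_of rf i) => _ cF _; exact: hex_edge_not_single cF se.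
split=> //; move: se.1; rewrite clar_ofE => /orP[//|/existsP [i ei]].
by move: (offH i); rewrite ei.
Qed.

Variables (d : cell) (b : bool).
Hypothesis single : forall k, odd k = b -> single_comp F (hex_edge d k).

Lemma base_single_parity k : (hex_edge d k \in M0) = (odd k == b).
Proof.
case ok: (odd k == b); first exact: (single_comp_clar_of (single (eqP ok))).1.
apply/negP => kM0.
have oddS : odd k.+1 = b by move/negbT: ok; rewrite /=; case: (odd k); case: b.
have := pm_incident_uniq (pm_base rf) kM0 (single_comp_clar_of (single oddS)).1
  (incident_hex_vertex_succ d k) (incident_hex_vertex _ _).
by move/eqP; rewrite (negbTE (hex_edge_neq_succ d k)).
Qed.

Lemma single_parity_disj : d \in S ->
  forall j v, v \in hex_vertices d -> v \in hex_vertices (cs j) -> False.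
Proof.
move=> Sd j v vd /hex_verticesP [m _ Ev]; subst v.
have [f fM0 /andP [fd vf]] := resonant_cover (conj Sd (ex_intro _ b base_single_parity)) vd.
have sf : single_comp F f.
  by case/hex_edgesP: fd fM0 => k _ ->; rewrite base_single_parity => /eqP; apply: single.
have [_ cF _] := hex_comp_clar_of rf j.
have Ef := single_comp_uniq sf (fsubsetP cF _ (mem_hex_edge _ m)) vf (incident_hex_vertex _ _).
by move: ((single_comp_clar_of sf).2 j); rewrite -Ef mem_hex_edge.
Qed.
End ClarOfFamily.

(* An alternating hexagon of [clar_of M0 cs] is [M0]-alternating and disjoint
   from the [cs i]: adding it to the family doubles the cube. *)
Lemma clar_of_maximal_hypercube (S : {fset cell}) (VS : {in S, forall c, valid_cell c}) U :
  maximal_hypercube S U ->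
  exists F, [/\ clar_cover S F, ~ alternating_hex S F & matchings_in S F = U].
Proof.
case=> HU NM; have [n [M0 [cs [rf EU]]]] := hypercube_rep VS HU.
exists (clar_of M0 cs); split; first exact: clar_cover_clar_of rf.
  2: by rewrite (matchings_in_clar_of rf) EU.
case=> d [Sd nhc /alternating_single_parity [b single]].
have Hb := base_single_parity rf single.
have rd : resonant S M0 d by split => //; exists b.
have rf2 := resonant_family_ext rf rd (single_parity_disj rf single Sd).
apply: NM; exists (cube M0 (ext_family cs d)); split; first exact: (hypercube_cube VS rf2).
rewrite fproperE EU -(matchings_in_clar_of rf) -(matchings_in_clar_of rf2).
rewrite matchings_inS ?clar_of_ext //=; apply/fsubsetPn; exists (symdiff M0 (hex_edges d)).
  apply/mem_matchings_in; split; first exact: flip_sub_clar_of_ext.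
  exact: pm_flip (pm_base rf) rd.
by apply/negP => /mem_matchings_in [/(flip_not_sub Hb single)].
Qed.

Lemma clar_sub_of_matchings_in (S : {fset cell}) (VS : {in S, forall c, valid_cell c}) F1 F2 :
  clar_cover S F1 -> matchings_in S F1 = matchings_in S F2 -> F1 `<=` F2.
Proof.
move=> C1 E; have [n [M0 [cs [rf EF]]]] := clar_rep VS C1.
apply/fsubsetP => e; rewrite EF => /(clar_of_covered rf) [M MU eM].
move: MU; rewrite -(matchings_in_clar_of rf) -EF E => /mem_matchings_in [MF _].
exact: (fsubsetP MF).
Qed.

Lemma matchings_in_inj (S : {fset cell}) (VS : {in S, forall c, valid_cell c}) F1 F2 :
  clar_cover S F1 -> clar_cover S F2 -> matchings_in S F1 = matchings_in S F2 -> F1 = F2.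
Proof.
move=> C1 C2 E; apply/eqP; rewrite eqEfsubset.
by rewrite (clar_sub_of_matchings_in VS C1 E) (clar_sub_of_matchings_in VS C2 (esym E)).
Qed.

Lemma inj_surj_bijective_inv (A B : Type) (g : B -> A) :
  injective g -> (forall a, exists b, g b = a) -> exists f : A -> B, bijective f.
Proof.
move=> g_inj g_surj; pose ginv a := proj1_sig (constructive_indefinite_description _ (g_surj a)).
have ginvK a : g (ginv a) = a := proj2_sig (constructive_indefinite_description _ (g_surj a)).
by exists ginv; exists g => [a|b]; [exact: ginvK | apply: g_inj; rewrite ginvK].
Qed.

Theorem corollary3 (S : {fset cell}) :
  hexagonal_system S -> kekulean S ->
  exists f : {U : {fset {fset edge}} | maximal_hypercube S U} ->
             {F : {fset edge} | clar_cover S F /\ ~ alternating_hex S F},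
    bijective f.
Proof.
case=> _ VS _ _ _.
have sig_eq T (P : T -> Prop) := @eq_sig_hprop T P (fun x => @proof_irrelevance (P x)).
pose g (F : {F : {fset edge} | clar_cover S F /\ ~ alternating_hex S F}) :=
  exist (maximal_hypercube S) _ (maximal_hypercube_of_clar VS (proj2_sig F).1 (proj2_sig F).2).
apply: (inj_surj_bijective_inv (g := g)).
  move=> [F1 [C1 NA1]] [F2 [C2 NA2]] /(congr1 (@proj1_sig _ _)) /= E.
  exact/sig_eq/(matchings_in_inj VS C1 C2 E).
move=> [U maxU]; have [F [C NA E]] := clar_of_maximal_hypercube VS maxU.
by exists (exist _ F (conj C NA)); apply: sig_eq.
Qed.
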